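(* Let $u:A^{\mathrm{ground}}\to[0,1]$ with $u(a_\bot)=1$ and $w:A^{\mathrm{ground}}\to\mathbb{R}$. Let $S^{\mathrm{best}}$ be the item list returned by the procedure BestPerm (described in the context) on input $(u,w)$. Then $f(S^{\mathrm{best}},u,w)=\max_{A\in\mathcal{A}}f(A,u,w)$.
   Context: $A^{\mathrm{ground}}=\{a_1,\dots,a_N,a_\bot\}$ with regular items $a_1,\dots,a_N$ and a virtual item $a_\bot$; $1\le m\le N$. $\mathcal{A}$ is the set of sequences consisting of between $1$ and $m$ distinct regular items followed by $a_\bot$. For a sequence $A$ of distinct items, $f(A,u,w)=\sum_{i=1}^{|A|}\prod_{j=1}^{i-1}(1-u(A(j)))u(A(i))w(A(i))$. Procedure BestPerm$(u,w)$: let $J$ be the number of regular items $a$ with $w(a)>w(a_\bot)$ and relabel these items $a_1,\dots,a_J$ so that $w(a_1)\ge\dots\ge w(a_J)$. If $J=0$: output $(a',a_\bot)$ where $a'$ maximizes $u(a)w(a)+(1-u(a))w(a_\bot)$ over regular items $a$. If $1\le J\le m$: output $(a_1,\dots,a_J,a_\bot)$. If $J>m$: compute tables $S[i][k]$ (sequences) and $F[i][k]$ (values) by: $S[J][1]=(a_J)$, $F[J][1]=u(a_J)w(a_J)+(1-u(a_J))w(a_\bot)$; for all $i\in[J]$, $S[i][0]=\emptyset$, $F[i][0]=w(a_\bot)$; for all $i\in[J]$ and $J-i+1<k\le m$, $F[i][k]=-\infty$; for $i=J-1,\dots,1$ and $k=1,\dots,\min\{m,J-i+1\}$: if $F[i+1][k]\ge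 u(a_i)w(a_i)+(1-u(a_i))F[i+1][k-1]$ then $S[i][k]=S[i+1][k]$, $F[i][k]=F[i+1][k]$, otherwise $S[i][k]=(a_i,S[i+1][k-1])$ (i.e. $a_i$ prepended), $F[i][k]=u(a_i)w(a_i)+(1-u(a_i))F[i+1][k-1]$. Output $S[1][m]$ followed by $a_\bot$. *)

(* Items: regular items a_1..a_N are 'I_N (as Some i),
   the virtual item a_bot is None : option 'I_N. *)
From HB Require Import structures.
From mathcomp Require Import all_boot all_order all_algebra.
Set Implicit Arguments. Unset Strict Implicit. Unset Printing Implicit Defensive.
Import Order.TTheory GRing.Theory Num.Theory.
Local Open Scope ring_scope.

Section Defs.
Variables (R : realFieldType) (N : nat).
Notation item := (option 'I_N).
Variables (u w : item -> R).

Definition fval (A : seq item) : R :=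
  \sum_(i < size A)
     (\prod_(j < i) (1 - u (nth None A j))) * u (nth None A i) * w (nth None A i).

Definition in_calA (m : nat) (A : seq item) : Prop :=
  exists s : seq 'I_N,
    [/\ uniq s, (1 <= size s)%N, (size s <= m)%N & A = map Some s ++ [:: None]].

Definition single_val (a : 'I_N) : R :=
  u (Some a) * w (Some a) + (1 - u (Some a)) * w None.

(* DP table: for the suffix t = (a_i, ..., a_J) of the relabelled list and k,
   dp t k = (F[i][k], S[i][k]), where F = None encodes -infinity.
   The base case F[J][1] = u(a_J)w(a_J)+(1-u(a_J))w(a_bot) arises from the
   general step with F[J+1][1] = -oo and F[J+1][0] = w(a_bot). *)
Fixpoint dp (t : seq 'I_N) (k : nat) : option R * seq 'I_N :=
  match t, k with
  | _, 0%N => (Some (w None), [::])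
  | [::], _.+1 => (None, [::])
  | a :: t', k'.+1 =>
      if (size t < k)%N then (None, [::]) else
      let cand := u (Some a) * w (Some a)
                  + (1 - u (Some a)) * odflt 0 (dp t' k').1 in
      match (dp t' k).1 with
      | Some F' => if cand <= F' then (Some F', (dp t' k).2)
                   else (Some cand, a :: (dp t' k').2)
      | None => (Some cand, a :: (dp t' k').2)
      end
  end.

(* BestPerm(u,w).  [s] is the relabelled list a_1..a_J (the regular items with
   w > w(a_bot), sorted by nonincreasing w), [a'] the maximizer used when J = 0. *)
Definition BestPerm (m : nat) (s : seq 'I_N) (a' : 'I_N) : seq item :=
  let J := size s in
  if J == 0%N then [:: Some a'; None]
  else if (J <= m)%N then map Some s ++ [:: None]
  else map Some (dp s m).2 ++ [:: None].

End Defs.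

From HB Require Import structures.
From mathcomp Require Import all_boot all_order all_algebra.
From mathcomp Require Import lra.
Set Implicit Arguments. Unset Strict Implicit. Unset Printing Implicit Defensive.
Import Order.TTheory GRing.Theory Num.Theory.
Local Open Scope ring_scope.

(* Since u(a_bot) = 1, the value of a_1 ... a_k a_bot is the cascade
   v_1 computed by v_i = u(a_i) w(a_i) + (1 - u(a_i)) v_(i+1), v_(k+1) = w(a_bot).
   Each step is a convex combination, so prepending a raises the value exactly
   when w(a) exceeds the current value.  Consequently dropping items with
   w <= w(a_bot) never hurts, swapping adjacent items so that the heavier one
   comes first never hurts, and, among the items heavier than a_bot listed by
   nonincreasing weight, enlarging a subsequence never hurts.  So some optimal
   list is a subsequence of a_1 ... a_J of length min(m, J): the whole list if
   J <= m, and otherwise the best subsequence of length m, which the dynamic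
   program computes because its recursion compares the only two ways such a
   subsequence of a_i ... a_J can start (with a_i or without it).  When J = 0
   every item only dilutes w(a_bot), so one best item is optimal. *)

Lemma subseq_cons_inv (T : eqType) (c : T) s y : subseq y (c :: s) ->
  subseq y s \/ exists2 y0, y = c :: y0 & subseq y0 s.
Proof.
case: y => [|x y0] /=; first by left; exact: sub0seq.
by case: eqP => [->|_] sub; [right; exists y0 | left].
Qed.

Section Cascade.
Variables (R : realFieldType) (N : nat) (u w : option 'I_N -> R).

Definition cascade (x : seq 'I_N) : R :=
  foldr (fun a v => u (Some a) * w (Some a) + (1 - u (Some a)) * v) (w None) x.

Definition heavier (a b : 'I_N) := w (Some b) <= w (Some a).

Lemma fval_cons b l : fval u w (b :: l) = u b * w b + (1 - u b) * fval u w l.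
Proof.
rewrite /fval big_ord_recl /= big_ord0 mul1r; congr (_ + _).
rewrite big_distrr /=; apply: eq_bigr => i _.
by rewrite big_ord_recl /= !mulrA.
Qed.

Lemma fval_cascade x :
  u None = 1 -> fval u w (map Some x ++ [:: None]) = cascade x.
Proof.
move=> uN; elim: x => [|a x IHx] /=; last by rewrite fval_cons IHx.
by rewrite /fval big_ord_recl big_ord0 /= big_ord0 uN !mul1r addr0.
Qed.

Hypothesis u01 : forall a, 0 <= u a <= 1.

Lemma ler_cascade_cons a r r' :
  cascade r <= cascade r' -> cascade (a :: r) <= cascade (a :: r').
Proof. by have /andP[? ?] := u01 (Some a); rewrite /=; nra. Qed.

Lemma cascade_cons_ge a r : cascade r <= w (Some a) -> cascade r <= cascade (a :: r).
Proof. by have /andP[? ?] := u01 (Some a); rewrite /=; nra. Qed.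

Lemma cascade_cons_le a r : w (Some a) <= cascade r -> cascade (a :: r) <= cascade r.
Proof. by have /andP[? ?] := u01 (Some a); rewrite /=; nra. Qed.

Lemma cascade_le_bound K r : w None <= K ->
  (forall a, a \in r -> w (Some a) <= K) -> cascade r <= K.
Proof.
move=> wN_le; elim: r => [|a r IHr] //= w_le.
have /andP[? ?] := u01 (Some a).
have : cascade r <= K by apply: IHr => b br; rewrite w_le // inE br orbT.
by have := w_le a (mem_head _ _); nra.
Qed.

Lemma cascade_ge_bound K r : K <= w None ->
  (forall a, a \in r -> K <= w (Some a)) -> K <= cascade r.
Proof.
move=> le_wN; elim: r => [|a r IHr] //= le_w.
have /andP[? ?] := u01 (Some a).
have : K <= cascade r by apply: IHr => b br; rewrite le_w // inE br orbT.
by have := le_w a (mem_head _ _); nra.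
Qed.

Lemma cascade_swap a b r :
  heavier b a -> cascade (a :: b :: r) <= cascade (b :: a :: r).
Proof.
rewrite /heavier -subr_ge0 /= => wba.
have /andP[ua0 ?] := u01 (Some a); have /andP[ub0 ?] := u01 (Some b).
have := mulr_ge0 (mulr_ge0 ua0 ub0) wba.
by move: (cascade r) => v; nra.
Qed.

Lemma cascade_move_behind a y1 y2 : all (heavier^~ a) y1 ->
  cascade (a :: y1 ++ y2) <= cascade (y1 ++ a :: y2).
Proof.
elim: y1 => [|b y1 IHy1] // /andP[ba y1a].
by apply: le_trans (cascade_swap _ ba) _; apply/ler_cascade_cons/IHy1.
Qed.

Lemma cascade_le_sorted x y :
  pairwise heavier y -> perm_eq x y -> cascade x <= cascade y.
Proof.
elim: x y => [|a x IHx] y y_sorted xy.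
  by rewrite (size0nil (esym (perm_size xy))).
have a_y : a \in y by rewrite -(perm_mem xy) mem_head.
case/splitPr: a_y y_sorted xy => y1 y2; rewrite pairwise_cat allrel_consr pairwise_cons.
move=> /and3P[/andP[y1a y1y2] y1_sorted /andP[_ y2_sorted]] xy.
have xy' : perm_eq x (y1 ++ y2).
  by rewrite -(perm_cons a) (perm_trans xy) // -cat1s perm_catCA.
apply: le_trans _ (cascade_move_behind _ y1a).
by apply/ler_cascade_cons/IHx; rewrite // pairwise_cat y1y2 y1_sorted.
Qed.

Lemma cascade_extend s y k :
  pairwise heavier s -> all (fun a => w None < w (Some a)) s -> subseq y s ->
  (size y <= k <= size s)%N ->
  exists y', [/\ subseq y' s, size y' = k & cascade y <= cascade y'].
Proof.
elim: s y k => [|c s IHs] y k.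
  by move=> _ _; rewrite subseq0 leqn0 => /eqP-> /= /eqP->; exists [::].
rewrite pairwise_cons => /andP[cs s_sorted] /andP[c_good s_good] ycs.
have s_cs : cascade s <= cascade (c :: s).
  apply/cascade_cons_ge/cascade_le_bound => [|b bs]; first exact: ltW.
  exact: (allP cs).
case/subseq_cons_inv: ycs => [ys | [y0 -> y0s]]; last first.
  case: k => [|k] //= k_range.
  have [y' [y's <- y0y']] := IHs y0 k s_sorted s_good y0s k_range.
  by exists (c :: y'); rewrite /= eqxx ler_cascade_cons.
move=> /andP[yk k_le]; case: (leqP k (size s)) => [ks | sk].
  have /(IHs y k s_sorted s_good ys)[y' [y's y'k yy']] : (size y <= k <= size s)%N.
    by rewrite yk ks.
  by exists y'; split=> //; apply: subseq_trans y's (subseq_cons s c).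
have /(IHs y _ s_sorted s_good ys)[y' [y's y's_size yy']] : (size y <= size s <= size s)%N.
  by rewrite size_subseq ?leqnn.
have y's_eq : y' = s by apply/eqP; rewrite -(size_subseq_leqif y's).2 y's_size.
exists (c :: s); split; rewrite /= ?eqxx ?subseq_refl //.
  by apply/eqP; rewrite eqn_leq sk k_le.
by rewrite y's_eq in yy'; apply: le_trans yy' s_cs.
Qed.

Lemma dp_size_lt t k : (size t < k)%N -> (dp u w t k).1 = None.
Proof. by case: t => [|a t]; case: k => // k /= ->. Qed.

Lemma dp_optimal t k : (k <= size t)%N ->
  exists S, [/\ dp u w t k = (Some (cascade S), S), subseq S t, size S = k &
    forall y, subseq y t -> size y = k -> cascade y <= cascade S].
Proof.
elim: t k => [|a t IHt] [|k] // kt.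
  by exists [::]; split=> // y; rewrite subseq0 => /eqP->.
  by exists [::]; split=> // y _ /size0nil->.
have [S1 [dp1 S1t S1k S1_opt]] := IHt k kt.
have with_a y : subseq y (a :: t) -> size y = k.+1 ->
    subseq y t \/ cascade y <= cascade (a :: S1).
  case/subseq_cons_inv=> [|[y0 -> y0t] [y0k]]; first by left.
  by right; apply/ler_cascade_cons/S1_opt.
have aS1 : subseq (a :: S1) (a :: t) by rewrite /= eqxx.
case: (leqP k.+1 (size t)) => [kt' | tk]; last first.
  exists (a :: S1); split=> //; first by rewrite /= ltnNge kt dp1 dp_size_lt.
    by rewrite /= S1k.
  move=> y /with_a y_cases y_size; case: (y_cases y_size) => // /size_subseq.
  by rewrite y_size leqNgt tk.
have [S2 [dp2 S2t S2k S2_opt]] := IHt k.+1 kt'.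
case: (leP (cascade (a :: S1)) (cascade S2)) => [aS1_S2 | S2_aS1].
  exists S2; split=> //.
  - by rewrite /= ltnNge kt dp1 dp2 /= ifT.
  - exact: subseq_trans S2t (subseq_cons t a).
  move=> y /with_a y_cases y_size.
  by case: (y_cases y_size) => [/S2_opt/(_ y_size) // | /le_trans]; apply.
exists (a :: S1); split=> //.
- by rewrite /= ltnNge kt dp1 dp2 /= ifN // -ltNge.
- by rewrite /= S1k.
move=> y /with_a y_cases y_size.
by case: (y_cases y_size) => [/S2_opt/(_ y_size)/le_trans | //]; apply; apply: ltW.
Qed.

Section HeavyItems.
Variable s : seq 'I_N.
Hypotheses (s_uniq : uniq s) (s_sorted : pairwise heavier s).
Hypothesis mem_s : forall a, (a \in s) = (w None < w (Some a)).

Lemma cascade_le_filter_heavy x : cascade x <= cascade [seq a <- x | a \in s].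
Proof.
elim: x => [|a x IHx] //=; case: ifP => a_s; first exact: ler_cascade_cons.
have wa_le : w (Some a) <= cascade [seq b <- x | b \in s].
  apply: le_trans (_ : w None <= _); first by rewrite leNgt -mem_s a_s.
  by apply: cascade_ge_bound => // b; rewrite mem_filter mem_s => /andP[/ltW].
exact: le_trans (ler_cascade_cons a IHx) (cascade_cons_le wa_le).
Qed.

Lemma cascade_le_subseq x m : uniq x -> (size x <= m)%N ->
  exists y, [/\ subseq y s, size y = minn m (size s) & cascade x <= cascade y].
Proof.
move=> x_uniq xm; set y := [seq a <- s | a \in x].
have y_size : (size y <= size x)%N.
  by apply: uniq_leq_size => [|a]; rewrite ?filter_uniq // mem_filter => /andP[].
have s_heavy : all (fun a => w None < w (Some a)) s by apply/allP => a; rewrite mem_s.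
have y_range : (size y <= minn m (size s) <= size s)%N.
  by rewrite geq_minr leq_min (leq_trans y_size xm) size_filter count_size.
have [y' [y's <- yy']] :=
  cascade_extend s_sorted s_heavy (filter_subseq _ _) y_range.
exists y'; split=> //; apply: le_trans (cascade_le_filter_heavy x) (le_trans _ yy').
apply: cascade_le_sorted; first exact: pairwise_filter.
apply: uniq_perm; rewrite ?filter_uniq // => a.
by rewrite !mem_filter andbC.
Qed.

End HeavyItems.

Lemma fval_max_over_calA m S : u None = 1 -> uniq S -> (1 <= size S <= m)%N ->
  (forall x, uniq x -> (1 <= size x <= m)%N -> cascade x <= cascade S) ->
  (forall A, in_calA m A -> fval u w A <= fval u w (map Some S ++ [:: None])) /\
  (exists2 A, in_calA m A & fval u w A = fval u w (map Some S ++ [:: None])).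
Proof.
move=> uN S_uniq /andP[S1 Sm] S_opt; split.
  move=> A [x [x_uniq x1 xm ->]]; rewrite !fval_cascade //.
  by apply: S_opt; rewrite ?x1.
by exists (map Some S ++ [:: None]) => //; exists S.
Qed.

End Cascade.

Theorem lemma2 (R : realFieldType) (N m : nat)
  (u w : option 'I_N -> R)
  (s : seq 'I_N) (a' : 'I_N) :
  (1 <= m)%N -> (m <= N)%N ->
  (forall a, 0 <= u a <= 1) -> u None = 1 ->
  (* s is a relabelling a_1..a_J of the regular items with w(a) > w(a_bot),
     in nonincreasing order of w (any tie-breaking) *)
  perm_eq s [seq a <- enum 'I_N | w None < w (Some a)] ->
  sorted (fun a b : 'I_N => w (Some b) <= w (Some a)) s ->
  (* a' maximizes u(a)w(a) + (1-u(a))w(a_bot) over regular items *)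
  (forall a : 'I_N, single_val u w a <= single_val u w a') ->
  let Sbest := BestPerm u w m s a' in
  (forall A, in_calA m A -> fval u w A <= fval u w Sbest) /\
  (exists2 A, in_calA m A & fval u w A = fval u w Sbest).
Proof.
move=> m1 _ u01 uN s_perm s_sorted a'_max Sbest.
have mem_s a : (a \in s) = (w None < w (Some a)).
  by rewrite (perm_mem s_perm) mem_filter mem_enum andbT.
have s_uniq : uniq s by rewrite (perm_uniq s_perm) filter_uniq ?enum_uniq.
have s_pairwise : pairwise (heavier w) s.
  by rewrite -sorted_pairwise // => b a c ab bc; apply: le_trans ab.
rewrite /Sbest /BestPerm; case: eqP => [/size0nil s0 | /eqP s_ne0].
  apply: (fval_max_over_calA (S := [:: a'])) => // -[|a r] // _ _.
  suff r_le : cascade u w r <= cascade u w [::].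
    exact: le_trans (ler_cascade_cons u01 a r_le) (a'_max a).
  by apply: cascade_le_bound => // b _; rewrite leNgt -mem_s s0.
case: (leqP (size s) m) => [sm | ms].
  apply: fval_max_over_calA; rewrite ?lt0n ?s_ne0 // => x x_uniq /andP[_ xm].
  have [y [ys /eqP y_size xy]] := cascade_le_subseq u01 s_uniq s_pairwise mem_s x_uniq xm.
  by move: y_size; rewrite (minn_idPr sm) (size_subseq_leqif ys) => /eqP <-.
have [S [-> S_s S_size S_opt]] := dp_optimal w u01 (ltnW ms).
apply: fval_max_over_calA; rewrite ?S_size ?m1 ?leqnn ?(subseq_uniq S_s) // => x x_uniq /andP[_ xm].
have [y [ys y_size xy]] := cascade_le_subseq u01 s_uniq s_pairwise mem_s x_uniq xm.
by rewrite (minn_idPl (ltnW ms)) in y_size; apply: le_trans xy (S_opt y ys y_size).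
Qed.
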